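(* Let $n\ge 1$ and $m\ge 2$ be integers with $m\nmid n$, let $t$ be an integer with $m\mid t$, let $k,s$ be nonnegative integers, and let $f=\sum_{i=0}^{k}a_i\theta_{m,i}$ and $g=\theta_{m,0}+\sum_{j=1}^{s}b_j\theta_{m,j}$ with $a_i,b_j\in\mathbb{F}_2$. Then $$(S^t\circ f)\odot\bigodot_{v\in\{1,2,\dots,m-1\}}\left(S^{t-v}\circ g+\mathbf{1}\right)=S^{t-m}\circ\left(\sum_{i=0}^{k}a_i\theta_{m,i+1}\right).$$
   Context: For $x=(x_0,\dots,x_{n-1})\in\mathbb{F}_2^n$, indices are taken modulo $n$. $S$ is the cyclic left shift $S(x_0,\dots,x_{n-1})=(x_1,\dots,x_{n-1},x_0)$; $S^i$ denotes its $i$-th power for any integer $i$ (so $S^n$ is the identity and negative powers are powers of the inverse). Maps $\mathbb{F}_2^n\to\mathbb{F}_2^n$ are added pointwise, composed by $\circ$, and multiplied by the Hadamard product $(f\odot g)(x)=(f_0(x)g_0(x),\dots,f_{n-1}(x)g_{n-1}(x))$ where $f_i,g_i$ are coordinate functions; $\bigodot$ denotes an iterated Hadamard product. $\mathbf{1}$ denotes the constant map with value $(1,\dots,1)$. For a nonnegative integer $k$, $\theta_{m,k}\colon\mathbb{F}_2^n\to\mathbb{F}_2^n$ is defined by $\theta_{m,k}(x)=y$ with $y_i=x_{i+mk}\prod_{1\le j\le mk-1,\ m\nmid j}(x_{i+j}+1)$; equivalently $\theta_{m,k}=S^{mk}\odot\bigodot_{1\le j\le mk-1,\,m\nmid j}(S^j+\mathbf{1})$,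 and $\theta_{m,0}$ is the identity map. *)

From mathcomp Require Import all_boot all_order all_algebra.
Set Implicit Arguments. Unset Strict Implicit. Unset Printing Implicit Defensive.
Import GRing.Theory.

(* Vectors of F_2^n are functions 'I_n -> bool (true = 1, xor is addition, andb is product). *)
Definition vec (n : nat) := 'I_n -> bool.
Definition map2 (n : nat) := vec n -> vec n.

Definition getz (n : nat) (x : vec n) (z : int) : bool :=
  match @insub nat (fun k => k < n) _ (absz (z %% n%:Z)%Z) with
  | Some i => x i
  | None => false
  end.

Definition shiftz (n : nat) (i : int) : map2 n :=
  fun x j => getz x ((nat_of_ord j)%:Z + i)%R.

Definition madd n (f g : map2 n) : map2 n := fun x j => addb (f x j) (g x j).
Definition mzero n : map2 n := fun _ _ => false.
Definition mscale n (c : bool) (f : map2 n) : map2 n := fun x j => c && f x j.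
Definition mcomp n (f g : map2 n) : map2 n := fun x => f (g x).
Definition mhad n (f g : map2 n) : map2 n := fun x j => f x j && g x j.
Definition mone n : map2 n := fun _ _ => true.

Definition theta (n m k : nat) : map2 n :=
  fun x i => getz x ((nat_of_ord i)%:Z + (m * k)%:Z)%R &&
    \big[andb/true]_(1 <= j < m * k | ~~ (m %| j)) ~~ getz x ((nat_of_ord i)%:Z + j%:Z)%R.
Arguments theta : clear implicits.
Arguments shiftz : clear implicits.

From mathcomp Require Import all_boot all_order all_algebra zify.
Import GRing.Theory.

(* Read theta_{m,k}(x) at an integer position z as the pattern "x_{z+mk} = 1
   and x_{z+r} = 0 for 0 < r < mk, m !| r" on the sequence of coordinates
   (thetaz).  Such a pattern of length k+1 at p is exactly a pattern of length
   k at p+m preceded by zeros at p+1, ..., p+m-1, so with p = i+t-m the right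
   hand side is f(x)_{i+t} (x_{p+1}+1) ... (x_{p+m-1}+1).  A pattern of
   positive length starting at p+u, 0 < u < m, is incompatible with any
   pattern starting at p+m; hence when f(x)_{i+t} = 1 all the terms theta_j,
   j >= 1, of g vanish at p+u and g reduces to x_{p+u} there.
   The argument works for any binary sequence indexed by the integers. *)

Definition thetaz (y : int -> bool) (m k : nat) (z : int) : bool :=
  y (z + (m * k)%:Z)%R &&
    \big[andb/true]_(1 <= r < m * k | ~~ (m %| r)) ~~ y (z + r%:Z)%R.

Lemma big_andb_natP (lo hi : nat) (P : pred nat) (F : nat -> bool) :
  reflect (forall r, lo <= r < hi -> P r -> F r)
          (\big[andb/true]_(lo <= r < hi | P r) F r).
Proof.
rewrite big_all_cond; apply: (iffP allP) => H r.
  by move=> hr Pr; apply: (implyP (H r _)) => //; rewrite mem_iota; lia.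
by rewrite mem_iota => hr; apply/implyP; apply: H; lia.
Qed.

Section Thetaz.

Variables (y : int -> bool) (m : nat).

Lemma thetazP k z :
  reflect (y (z + (m * k)%:Z)%R /\
           forall r, 1 <= r < m * k -> ~~ (m %| r) -> ~~ y (z + r%:Z)%R)
          (thetaz y m k z).
Proof. by apply: (iffP andP) => -[h1 /big_andb_natP h2]. Qed.

Lemma thetaz0 z : thetaz y m 0 z = y z.
Proof. by rewrite /thetaz muln0 addr0 big_geq // andbT. Qed.

Lemma thetazS k z : 0 < m ->
  thetaz y m k.+1 z =
    thetaz y m k (z + m%:Z)%R && \big[andb/true]_(1 <= u < m) ~~ y (z + u%:Z)%R.
Proof.
move=> m_gt0; apply/thetazP/andP; rewrite mulnS.
- case=> top gap; split.
  + apply/thetazP; split; first by rewrite -addrA -PoszD.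
    move=> r hr m_r; rewrite -addrA -PoszD; apply: gap; first lia.
    by rewrite dvdn_addr.
  + apply/big_andb_natP => u /andP[u_gt0 u_lt_m] _.
    by apply: gap; [lia | rewrite gtnNdvd].
- case=> /thetazP[top gap] /big_andb_natP gap0; split.
  + by rewrite PoszD addrA.
  + move=> r hr m_r; have [r_lt_m | r_ge_m] := ltnP r m; first by apply: gap0; lia.
    have r_gt_m : m < r.
      by rewrite ltn_neqAle r_ge_m andbT; apply: contraNneq m_r => <-.
    rewrite -(subnKC r_ge_m) PoszD addrA; apply: gap; first lia.
    by rewrite -(dvdn_addr _ (dvdnn m)) subnKC.
Qed.

Lemma thetaz_disjoint j l z u : 0 < u < m -> 0 < j ->
  thetaz y m j (z + u%:Z)%R -> ~~ thetaz y m l (z + m%:Z)%R.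
Proof.
move=> /andP[u_gt0 u_lt_m]; case: j => // j _ /thetazP[topj gapj].
apply/negP => /thetazP[topl gapl]; rewrite mulnS in topj gapj.
have u_ndvd : ~~ (m %| u) by rewrite gtnNdvd.
have [lt|gt|eq] := ltngtP (u + (m + m * j)) (m + m * l).
- move: topj; rewrite (_ : (_ + _)%R = z + m%:Z + (u + m * j)%:Z)%R; last lia.
  by apply/negP; apply: gapl; [lia | rewrite dvdn_addl ?dvdn_mulr].
- move: topl; rewrite (_ : (_ + _)%R = z + u%:Z + (m + m * l - u)%:Z)%R; last lia.
  apply/negP; apply: gapj; first lia.
  by rewrite dvdn_subr ?dvdn_addr ?dvdn_mulr //; lia.
- have : m %| u + (m + m * j) by rewrite eq dvdn_addr ?dvdn_mulr.
  by rewrite dvdn_addl ?dvdn_addr ?dvdn_mulr // (negbTE u_ndvd).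
Qed.

End Thetaz.

Section Window.

Variables (y : int -> bool) (m : nat) (a b : nat -> bool) (k s : nat).
Hypothesis m_gt0 : 0 < m.

Lemma thetaz_window q :
  \big[addb/false]_(l < k.+1) (a l && thetaz y m l q) &&
  \big[andb/true]_(1 <= v < m)
    ~~ (y (q - v%:Z)%R (+)
        \big[addb/false]_(1 <= j < s.+1) (b j && thetaz y m j (q - v%:Z)%R)) =
    \big[addb/false]_(l < k.+1) (a l && thetaz y m l.+1 (q - m%:Z)%R).
Proof.
set p := (q - m%:Z)%R; have -> : q = (p + m%:Z)%R by rewrite subrK.
under [RHS]eq_bigr do rewrite thetazS // andbA.
rewrite -big_distrl /=.
have [/existsP[l /andP[_ hl]] | /existsPn none] :=
  boolP [exists l : 'I_k.+1, a l && thetaz y m l (p + m%:Z)%R]; last first.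
  by rewrite big1 // => l _; apply/negbTE/none.
congr andb; rewrite big_nat_rev /=; apply: eq_big_nat => v hv.
rewrite add1n subSS (_ : (_ - _)%R = p + v%:Z)%R; last lia.
rewrite big_nat_cond big1 ?addbF // => j /andP[/andP[j_gt0 _] _].
by apply/negbTE/nandP; right; apply: contraL hl; apply: thetaz_disjoint.
Qed.

End Window.

Section Coordinates.

Variable n : nat.
Hypothesis n_gt0 : 0 < n.

Lemma modz_nat_ge0 z : (0 <= (z %% n%:Z)%Z)%R.
Proof. by apply: modz_ge0; rewrite eqz_nat -lt0n. Qed.

Lemma absz_modz_lt z : `|(z %% n%:Z)%Z|%N < n.
Proof. by rewrite -ltz_nat gez0_abs ?modz_nat_ge0 // ltz_pmod. Qed.

Lemma getzE (x : vec n) z : getz x z = x (Ordinal (absz_modz_lt z)).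
Proof.
rewrite /getz; case: insubP => [i _ val_i | ]; last by rewrite absz_modz_lt.
by congr x; apply: val_inj.
Qed.

Lemma getz_madd (f g : map2 n) x z :
  getz (madd f g x) z = getz (f x) z (+) getz (g x) z.
Proof. by rewrite !getzE. Qed.

Lemma getz_modzDl (x : vec n) (z c : int) :
  getz x ((z %% n%:Z)%Z + c)%R = getz x (z + c)%R.
Proof. by rewrite /getz modzDml. Qed.

Lemma getz_theta m k (x : vec n) z : getz (theta n m k x) z = thetaz (getz x) m k z.
Proof.
rewrite getzE /theta /thetaz /= gez0_abs ?modz_nat_ge0 // getz_modzDl.
by congr andb; apply: eq_bigr => r _; rewrite getz_modzDl.
Qed.

Lemma getz_sum_theta m (I : Type) (r : seq I) (P : pred I) (c : I -> bool)
    (d : I -> nat) (x : vec n) z :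
  getz ((\big[@madd n/@mzero n]_(l <- r | P l) mscale (c l) (theta n m (d l))) x) z =
    \big[addb/false]_(l <- r | P l) (c l && thetaz (getz x) m (d l) z).
Proof.
rewrite getzE (big_morph (fun h : map2 n => h x _) (id1 := false) (op1 := addb)) //.
by apply: eq_bigr => l _; rewrite -getz_theta [in RHS]getzE.
Qed.

End Coordinates.

Lemma mhad_big_apply n (I : Type) (r : seq I) (P : pred I) (F : I -> map2 n) x i :
  (\big[@mhad n/@mone n]_(l <- r | P l) F l) x i =
    \big[andb/true]_(l <- r | P l) F l x i.
Proof. by rewrite (big_morph (fun h : map2 n => h x i) (id1 := true) (op1 := andb)). Qed.

Theorem lemma3 (n m : nat) (t : int) (k s : nat) (a b : nat -> bool) :
  (1 <= n)%N -> (2 <= m)%N -> ~~ (m %| n)%N -> (m%:Z %| t)%Z ->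
  let f : map2 n := \big[@madd n/@mzero n]_(i < k.+1) mscale (a i) (theta n m i) in
  let g : map2 n := madd (theta n m 0)
        (\big[@madd n/@mzero n]_(1 <= j < s.+1) mscale (b j) (theta n m j)) in
  forall (x : vec n) (i : 'I_n),
    mhad (mcomp (shiftz n t) f)
         (\big[@mhad n/@mone n]_(1 <= v < m)
             madd (mcomp (shiftz n (t - v%:Z)%R) g) (@mone n)) x i
    = mcomp (shiftz n (t - m%:Z)%R)
        (\big[@madd n/@mzero n]_(i < k.+1) mscale (a i) (theta n m i.+1)) x i.
Proof.
move=> n_gt0 m_ge2 _ _ f g x i.
rewrite /mhad mhad_big_apply {1}/madd /mcomp /shiftz /mone.
rewrite /f /g !getz_sum_theta //.
under [X in _ && X]eq_bigr do
  rewrite getz_madd // getz_theta // thetaz0 getz_sum_theta // addbT addrA.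
by rewrite addrA thetaz_window //; lia.
Qed.
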